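(* Let $\epsilon>0$, $\delta>0$, and let $\rho$ be a pure $n$-qubit state. Then $N=O(n\log(1/\delta)/\epsilon^2)$ pairs of copies $\rho\otimes\rho$ suffice to produce, with probability $1-\delta$, simultaneously for all $x=(v_1,w_1,\dots,v_n,w_n)\in\{0,1\}^{2n}$ and all $1\le k\le n$: estimates $\pi_\rho(v_1,w_1,\dots,v_k,w_k)$ with $|\pi_\rho(v_1,w_1,\dots,v_k,w_k)-p_\rho(v_1,w_1,\dots,v_k,w_k)|\le\epsilon/2^k$, and estimates $\pi_\rho(v_1,w_1,\dots,v_k)$ with $|\pi_\rho(v_1,w_1,\dots,v_k)-p_\rho(v_1,w_1,\dots,v_k)|\le 2\epsilon/2^k$.
   Context: Pauli strings are labelled by $x=(v_1,w_1,\dots,v_n,w_n)\in\{0,1\}^{2n}$ via $P_x=i^{v\cdot w}(X^{v_1}Z^{w_1})\otimes\cdots\otimes(X^{v_n}Z^{w_n})$. The Pauli distribution of a pure state is $p_\rho(x)=\mathrm{tr}(\rho P_x)^2/2^n$, viewed as a distribution on bit strings of length $2n$; $p_\rho(v_1,w_1,\dots,v_k,w_k)$ and $p_\rho(v_1,w_1,\dots,v_k)$ denote its marginals on the first $2k$ and first $2k-1$ bits respectively (sums over all remaining bits). *)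

From HB Require Import structures.
From mathcomp Require Import all_boot all_order all_algebra.
From mathcomp Require Import complex.
From mathcomp Require Import reals exp.
Set Implicit Arguments. Unset Strict Implicit. Unset Printing Implicit Defensive.
Import Order.TTheory GRing.Theory Num.Theory.
Local Open Scope ring_scope.
Local Open Scope complex_scope.

Section Pauli.
Variable R : realType.
Local Notation C := R[i].

Definition bits (n : nat) := {ffun 'I_n -> bool}.
(* Pauli labels x = (v_1,w_1,...,v_n,w_n), stored as x i = (v_{i+1}, w_{i+1}) *)
Definition plabel (n : nat) := {ffun 'I_n -> bool * bool}.

(* matrix entry <a| P_x |b>, P_x = i^{v.w} (X^{v_1}Z^{w_1}) (x) ... (x) (X^{v_n}Z^{w_n});
   (X^v Z^w)|b> = (-1)^{w b} |b xor v> *)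
Definition pauli_entry n (x : plabel n) (a b : bits n) : C :=
  'i ^+ (\sum_(i < n) ((x i).1 && (x i).2 : nat))%N *
  \prod_(i < n) ((a i == xorb (b i) (x i).1)%:R * (-1) ^+ ((x i).2 && b i)).

Definition pure_state n (psi : {ffun bits n -> C}) : Prop :=
  \sum_(a : bits n) (psi a)^* * psi a = 1.

(* tr(rho P_x) with rho = |psi><psi| *)
Definition pauli_expval n (psi : {ffun bits n -> C}) (x : plabel n) : C :=
  \sum_(a : bits n) \sum_(b : bits n) (psi a)^* * pauli_entry x a b * psi b.

Definition pauli_dist n (psi : {ffun bits n -> C}) (x : plabel n) : C :=
  pauli_expval psi x ^+ 2 / (2 ^+ n).

(* p_rho(v_1,w_1,...,v_k,w_k): marginal on the first 2k bits of x *)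
Definition marg_even n (psi : {ffun bits n -> C}) (k : nat) (x : plabel n) : C :=
  \sum_(y : plabel n | [forall i : 'I_n, (i < k)%N ==> (y i == x i)])
     pauli_dist psi y.

(* p_rho(v_1,w_1,...,v_k): marginal on the first 2k-1 bits of x *)
Definition marg_odd n (psi : {ffun bits n -> C}) (k : nat) (x : plabel n) : C :=
  \sum_(y : plabel n | [forall i : 'I_n,
          ((i.+1 < k)%N ==> (y i == x i)) &&
          ((i.+1 == k)%N ==> ((y i).1 == (x i).1))])
     pauli_dist psi y.

(* Hilbert space of N pairs of copies rho (x) rho: basis indexed by
   'I_N -> bits n * bits n *)
Definition pairs_basis (n N : nat) := {ffun 'I_N -> bits n * bits n}.

(* the state vector |psi>^{(x) 2N} = (|psi> (x) |psi>)^{(x) N} *)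
Definition copies n N (psi : {ffun bits n -> C}) (t : pairs_basis n N) : C :=
  \prod_(j < N) (psi (t j).1 * psi (t j).2).

Definition is_povm (T O : finType) (M : O -> T -> T -> C) : Prop :=
  (forall o (v : T -> C), 0 <= \sum_(a : T) \sum_(b : T) (v a)^* * M o a b * v b) /\
  (forall a b : T, \sum_(o : O) M o a b = (a == b)%:R).

Definition povm_prob (T O : finType) (M : O -> T -> T -> C) (Psi : T -> C)
  (S : pred O) : C :=
  \sum_(o : O | S o) \sum_(a : T) \sum_(b : T) (Psi a)^* * M o a b * Psi b.

End Pauli.

From mathcomp Require Import all_boot all_order all_algebra.
From mathcomp Require Import complex.
From mathcomp Require Import reals exp sequences.
From mathcomp Require Import ring lra zify.
Set Implicit Arguments. Unset Strict Implicit. Unset Printing Implicit Defensive.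
Import Order.TTheory GRing.Theory Num.Theory.
Local Open Scope ring_scope.
Local Open Scope complex_scope.

(* Measuring a copy of rho (x) rho in the Bell basis gives an
   outcome al in {0,1}^(2n) with probability q(al) = |<Phi_al|psi (x) psi>|^2, and
   the Bell-basis expansion of P_y (x) P_y gives tr(rho P_y)^2 = sum_al q(al) chi_al(y)
   for a +-1 character chi_al.  Summing chi_al(y) over the y extending a fixed prefix
   of length 2k gives +-2^(n-k), so 2^k p_rho(v_1,w_1,...,v_k,w_k) is the q-mean of a
   +-1-valued function of al.  By Hoeffding's inequality its empirical mean over N
   samples is eps-accurate except with probability 2 exp(-N eps^2/32), and a union
   bound over the 4^n n pairs (x, k) gives N = O(n log(1/delta)/eps^2).  Marginals
   on 2k-1 bits are sums of two marginals on 2k bits. *)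

Section SingleQubit.
Variable T : comNzRingType.

Definition pauli1 (x : bool * bool) (a b : bool) : T :=
  (a == xorb b x.1)%:R * (-1) ^+ (x.2 && b).

Definition bell_sign1 (al x : bool * bool) : T :=
  (-1) ^+ (x.1 && x.2) * (-1) ^+ (x.2 && al.1) * (-1) ^+ (al.2 && x.1).

Lemma sum_bool_pair (F : bool * bool -> T) :
  \sum_x F x = F (false, false) + F (false, true) + F (true, false) + F (true, true).
Proof.
rewrite (eq_bigr (fun x => F (x.1, x.2))); last by case.
by rewrite -(pair_bigA _ (fun a b => F (a, b))) !big_bool /=; ring.
Qed.

Lemma pauli1_tensor x a b c d :
  2 * ((-1) ^+ (x.1 && x.2) * pauli1 x a b * pauli1 x c d) =
  \sum_al bell_sign1 al x * pauli1 al c a * pauli1 al d b.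
Proof.
rewrite sum_bool_pair /bell_sign1 /pauli1.
by case: x => [[] []]; case: a; case: b; case: c; case: d => /=; ring.
Qed.

Lemma sum_pauli1_bell a b c d :
  \sum_al pauli1 al c a * pauli1 al d b = 2 * ((a == b) && (c == d))%:R.
Proof.
rewrite sum_bool_pair /pauli1.
by case: a; case: b; case: c; case: d => /=; ring.
Qed.

Lemma sum_bell_sign1 al : \sum_x bell_sign1 al x = 2 * (-1) ^+ (al.1 && al.2).
Proof. by rewrite sum_bool_pair /bell_sign1; case: al => [[] []] /=; ring. Qed.

End SingleQubit.

Section Qubits.
Variable T : comNzRingType.

Lemma prodr_nat_forall (I : finType) (P : pred I) :
  \prod_i ((P i)%:R : T) = [forall i, P i]%:R.
Proof.
have [/forallP allP | /forallPn [i nPi]] := boolP [forall i, P i].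
  by rewrite big1 // => i _; rewrite allP.
by rewrite (bigD1 i) //= (negbTE nPi) mul0r.
Qed.

Lemma prodr_nat_eq_ffun (I : finType) (X : eqType) (f g : {ffun I -> X}) :
  \prod_i ((f i == g i)%:R : T) = (f == g)%:R.
Proof.
have -> : (f == g) = [forall i, f i == g i] by apply/eqP/eqfunP => [-> // | /ffunP].
exact: prodr_nat_forall.
Qed.

Variable n : nat.

(* <a| X^v_1 Z^w_1 (x) ... (x) X^v_n Z^w_n |b>, i.e. pauli_entry without the phase i^(v.w) *)
Definition pauli_amp (y : plabel n) (a b : bits n) : T := \prod_i pauli1 T (y i) (a i) (b i).

(* Amplitude at |s.1>|s.2> of the unnormalised Bell vector sum_b |b> (x) X^u Z^v |b>. *)
Definition bell_amp (al : plabel n) (s : bits n * bits n) : T := pauli_amp al s.2 s.1.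

Definition bell_sign (al y : plabel n) : T := \prod_i bell_sign1 T (al i) (y i).

Lemma sum_bell_amp s s' : \sum_al bell_amp al s * bell_amp al s' = 2 ^+ n * (s == s')%:R.
Proof.
rewrite (eq_bigr (fun al : plabel n => \prod_i
    (pauli1 T (al i) (s.2 i) (s.1 i) * pauli1 T (al i) (s'.2 i) (s'.1 i)))); last first.
  by move=> al _; rewrite -big_split.
rewrite -(bigA_distr_bigA (fun i x => pauli1 T x (s.2 i) (s.1 i) * pauli1 T x (s'.2 i) (s'.1 i))).
rewrite (eq_bigr (fun i => 2 * ((s.1 i == s'.1 i)%:R * (s.2 i == s'.2 i)%:R))); last first.
  by move=> i _; rewrite sum_pauli1_bell -mulnb natrM.
rewrite big_split prodr_const card_ord big_split /= !prodr_nat_eq_ffun -natrM mulnb.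
by case: s s' => [a c] [b d]; rewrite xpair_eqE.
Qed.

Lemma pauli_amp_tensor (y : plabel n) (a b c d : bits n) :
  2 ^+ n * ((-1) ^+ (\sum_i ((y i).1 && (y i).2) : nat) * pauli_amp y a b * pauli_amp y c d) =
  \sum_al bell_sign al y * bell_amp al (a, c) * bell_amp al (b, d).
Proof.
rewrite (eq_bigr (fun al : plabel n => \prod_i
    (bell_sign1 T (al i) (y i) * pauli1 T (al i) (c i) (a i) * pauli1 T (al i) (d i) (b i))));
  last by move=> al _; rewrite -!big_split.
rewrite -(bigA_distr_bigA (fun i x =>
    bell_sign1 T x (y i) * pauli1 T x (c i) (a i) * pauli1 T x (d i) (b i))) /=.
rewrite -(eq_bigr _ (fun i _ => pauli1_tensor _ (y i) (a i) (b i) (c i) (d i))).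
rewrite big_split prodr_const card_ord /=; congr (_ * _).
rewrite (big_morph (fun k => (-1 : T) ^+ k) (exprD _) (expr0 _)).
by rewrite /pauli_amp -!big_split.
Qed.

End Qubits.

Lemma pauli_entry_tensor (R : realType) n (y : plabel n) (a b c d : bits n) :
  2 ^+ n * (pauli_entry R y a b * pauli_entry R y c d) =
  \sum_al bell_sign R[i] al y * bell_amp R[i] al (a, c) * bell_amp R[i] al (b, d).
Proof.
rewrite -pauli_amp_tensor /pauli_entry; set m := (\sum_i _)%N.
have -> : (-1) ^+ m = 'i ^+ m * 'i ^+ m :> R[i] by rewrite -exprMn -expr2 sqr_i.
by rewrite /pauli_amp; congr (_ * _); ring.
Qed.

Lemma rmorph_bell_amp (T T' : comNzRingType) (f : {rmorphism T -> T'}) n al s :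
  f (bell_amp T (n := n) al s) = bell_amp T' al s.
Proof.
rewrite rmorph_prod; apply: eq_bigr => i _.
by rewrite rmorphM rmorphXn rmorph_nat rmorphN1.
Qed.

Lemma rmorph_bell_sign (T T' : comNzRingType) (f : {rmorphism T -> T'}) n (al y : plabel n) :
  f (bell_sign T al y) = bell_sign T' al y.
Proof.
rewrite rmorph_prod; apply: eq_bigr => i _.
by rewrite !rmorphM !rmorphXn rmorphN1.
Qed.

Lemma conj_real_complex (R : realType) (x : R) : Num.conj x%:C = x%:C.
Proof. exact: conjc_real. Qed.

Lemma mulr_sum2 (T : comNzRingType) (I J K L : finType) (F : I -> J -> T) (G : K -> L -> T) :
  (\sum_i \sum_j F i j) * (\sum_k \sum_l G k l) = \sum_i \sum_k \sum_j \sum_l F i j * G k l.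
Proof.
rewrite big_distrl; apply: eq_bigr => i _; rewrite big_distrl [RHS]exchange_big /=.
apply: eq_bigr => j _; rewrite big_distrr; apply: eq_bigr => k _; exact: big_distrr.
Qed.

Lemma sumr_delta (T : pzSemiRingType) (I : finType) (i : I) (F : I -> T) :
  \sum_j (i == j)%:R * F j = F i.
Proof.
rewrite (bigD1 i) //= eqxx mul1r big1 ?addr0 // => j.
by rewrite eq_sym => /negbTE ->; rewrite mul0r.
Qed.

Lemma sum_pairE (V : nmodType) (A B : finType) (F : A * B -> V) :
  \sum_s F s = \sum_a \sum_b F (a, b).
Proof. by rewrite pair_big /=; apply: eq_bigr => -[]. Qed.

Section BellSampling.
Variables (R : realType) (n : nat).
Local Notation C := R[i].

Definition bell_proj (al : plabel n) (s s' : bits n * bits n) : R :=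
  2 ^- n * bell_amp R al s * bell_amp R al s'.

Lemma sum_bell_proj s s' : \sum_al bell_proj al s s' = (s == s')%:R.
Proof.
rewrite /bell_proj; under eq_bigr do rewrite -mulrA.
by rewrite -big_distrr /= sum_bell_amp mulrA mulVf ?mul1r // expf_neq0 ?pnatr_eq0.
Qed.

Lemma sum_bell_proj_sign (y : plabel n) s s' :
  \sum_al (bell_proj al s s' * bell_sign R al y)%:C =
  pauli_entry R y s.1 s'.1 * pauli_entry R y s.2 s'.2.
Proof.
case: s s' => [a c] [b d] /=.
have inv2n : (2 ^- n : R)%:C * 2 ^+ n = 1.
  by rewrite fmorphV rmorphXn rmorph_nat mulVf // expf_neq0 ?pnatr_eq0.
rewrite -[RHS]mul1r -inv2n -mulrA pauli_entry_tensor big_distrr /=; apply: eq_bigr => al _.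
by rewrite !rmorphM /= !rmorph_bell_amp rmorph_bell_sign; ring.
Qed.

Variable psi : {ffun bits n -> C}.

Definition pair_amp (s : bits n * bits n) : C := psi s.1 * psi s.2.

Definition bell_overlap (al : plabel n) : C := \sum_s (bell_amp R al s)%:C * pair_amp s.

Definition bell_prob (al : plabel n) : R :=
  2 ^- n * (complex.Re (bell_overlap al) ^+ 2 + complex.Im (bell_overlap al) ^+ 2).

Lemma bell_prob_ge0 al : 0 <= bell_prob al.
Proof. by rewrite mulr_ge0 ?invr_ge0 ?exprn_ge0 ?addr_ge0 ?sqr_ge0. Qed.

Lemma bell_born al :
  \sum_s \sum_s' (pair_amp s)^* * (bell_proj al s s')%:C * pair_amp s' = (bell_prob al)%:C.
Proof.
have -> : \sum_s \sum_s' (pair_amp s)^* * (bell_proj al s s')%:C * pair_amp s' =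
    (2 ^- n)%:C * ((bell_overlap al)^* * bell_overlap al).
  rewrite /bell_overlap rmorph_sum big_distrl big_distrr /=; apply: eq_bigr => s _.
  rewrite big_distrr big_distrr /=; apply: eq_bigr => s' _.
  by rewrite /bell_proj !rmorphM /= conj_real_complex; ring.
by rewrite /bell_prob rmorphM /= add_Re2_Im2 sqr_normc; congr (_ * _); exact: mulrC.
Qed.

Lemma sum_bell_prob : pure_state psi -> \sum_al bell_prob al = 1.
Proof.
move=> psi_pure; apply: complexI; rewrite rmorph_sum /=.
under eq_bigr do rewrite -bell_born.
rewrite exchange_big /=; under eq_bigr do rewrite exchange_big /=.
have -> : \sum_s \sum_s' \sum_al (pair_amp s)^* * (bell_proj al s s')%:C * pair_amp s' =
    \sum_s \sum_s' (s == s')%:R * ((pair_amp s)^* * pair_amp s').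
  apply: eq_bigr => s _; apply: eq_bigr => s' _.
  by rewrite -big_distrl -big_distrr /= -rmorph_sum sum_bell_proj rmorph_nat; ring.
under eq_bigr do rewrite sumr_delta.
rewrite sum_pairE -[RHS]psi_pure; apply: eq_bigr => a _.
rewrite -[RHS]mulr1 -psi_pure big_distrr /=; apply: eq_bigr => c _.
by rewrite /pair_amp rmorphM; ring.
Qed.

Lemma pauli_expval_sqr_pairs (y : plabel n) :
  pauli_expval psi y ^+ 2 = \sum_s \sum_s' (pair_amp s)^* *
    (pauli_entry R y s.1 s'.1 * pauli_entry R y s.2 s'.2) * pair_amp s'.
Proof.
rewrite expr2 /pauli_expval mulr_sum2 sum_pairE; apply: eq_bigr => a _.
apply: eq_bigr => c _; rewrite sum_pairE; apply: eq_bigr => b _; apply: eq_bigr => d _.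
by rewrite /pair_amp rmorphM; ring.
Qed.

Lemma pauli_expval_sqr (y : plabel n) :
  pauli_expval psi y ^+ 2 = \sum_al (bell_prob al * bell_sign R al y)%:C.
Proof.
rewrite pauli_expval_sqr_pairs.
under [RHS]eq_bigr do rewrite rmorphM /= -bell_born big_distrl.
rewrite [RHS]exchange_big; apply: eq_bigr => s _.
under [RHS]eq_bigr do rewrite big_distrl.
rewrite [RHS]exchange_big; apply: eq_bigr => s' _.
rewrite -sum_bell_proj_sign big_distrr big_distrl /=; apply: eq_bigr => al _.
by rewrite rmorphM; ring.
Qed.

End BellSampling.

Lemma sum2_ffun_prod (T : comNzRingType) (I X : finType) (H : I -> X -> X -> T) :
  \sum_(t : {ffun I -> X}) \sum_(t' : {ffun I -> X}) \prod_j H j (t j) (t' j) =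
  \prod_j \sum_s \sum_s' H j s s'.
Proof.
rewrite (eq_bigr (fun t : {ffun I -> X} => \prod_j \sum_s' H j (t j) s')) => [|t _].
  by rewrite (bigA_distr_bigA (fun j s => \sum_s' H j s s')).
by rewrite (bigA_distr_bigA (fun j s' => H j (t j) s')).
Qed.

Section BellPOVM.
Variables (R : realType) (n N : nat).
Local Notation C := R[i].

Definition bell_povm (o : {ffun 'I_N -> plabel n}) (t t' : pairs_basis n N) : C :=
  (\prod_j bell_proj R (o j) (t j) (t' j))%:C.

Lemma bell_povm_is_povm : is_povm bell_povm.
Proof.
split=> [o v | t t'].
  pose G (t : pairs_basis n N) : C := (\prod_j bell_amp R (o j) (t j))%:C.
  have -> : \sum_t \sum_t' (v t)^* * bell_povm o t t' * v t' =
      (2 ^- n ^+ N)%:C * ((\sum_t G t * v t)^* * (\sum_t G t * v t)).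
    rewrite rmorph_sum big_distrl big_distrr /=; apply: eq_bigr => t _.
    rewrite big_distrr big_distrr /=; apply: eq_bigr => t' _.
    rewrite /bell_povm /bell_proj /G !big_split /= prodr_const card_ord.
    by rewrite !rmorphM /= conj_real_complex; ring.
  by rewrite mulr_ge0 ?ler0c ?exprn_ge0 ?invr_ge0 ?exprn_ge0 // mulrC mulcJ_ge0.
rewrite /bell_povm -rmorph_sum -(bigA_distr_bigA (fun j al => bell_proj R al (t j) (t' j))) /=.
under eq_bigr do rewrite sum_bell_proj.
by rewrite prodr_nat_eq_ffun rmorph_nat.
Qed.

Lemma povm_prob_bell psi (S : pred {ffun 'I_N -> plabel n}) :
  povm_prob bell_povm (copies (N := N) psi) S = (\sum_(o | S o) \prod_j bell_prob psi (o j))%:C.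
Proof.
rewrite /povm_prob rmorph_sum /=; apply: eq_bigr => o _.
rewrite rmorph_prod /= -(eq_bigr _ (fun j _ => bell_born psi (o j))).
rewrite -sum2_ffun_prod; apply: eq_bigr => t _; apply: eq_bigr => t' _.
rewrite /copies /bell_povm rmorph_prod rmorph_prod /= -!big_split /=.
by apply: eq_bigr => j _.
Qed.

End BellPOVM.

Lemma union_bound (R : numDomainType) (I O : finType) (P : pred O) (B : I -> pred O)
    (w : O -> R) :
  (forall o, 0 <= w o) -> (forall o, P o -> exists i, B i o) ->
  \sum_(o | P o) w o <= \sum_i \sum_(o | B i o) w o.
Proof.
move=> w_ge0 PB; rewrite (exchange_big_dep xpredT) //= big_mkcond /=.
apply: ler_sum => o _; case: ifP => [/PB [i Bio] | _]; last exact: sumr_ge0.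
by rewrite (bigD1 i) //= lerDl sumr_ge0.
Qed.

Lemma prob_ge_union_bound (R : realDomainType) (I O : finType) (B : I -> pred O) (S : pred O)
    (w : O -> R) (delta : R) :
  (forall o, 0 <= w o) -> \sum_o w o = 1 -> (forall o, [forall i, ~~ B i o] -> S o) ->
  \sum_i \sum_(o | B i o) w o <= delta -> 1 - delta <= \sum_(o | S o) w o.
Proof.
move=> w_ge0 w_sum1 goodS bad_le.
have : \sum_(o | ~~ S o) w o <= delta.
  apply: le_trans bad_le; apply: union_bound => // o /(contra (goodS o)).
  by case/forallPn => i /negbNE; exists i.
by rewrite -w_sum1 [\sum_o w o](bigID S) /=; lra.
Qed.

Lemma expR_le_quad (R : realType) (y : R) : 2 * y <= 1 -> expR y <= 1 + y + 2 * y ^+ 2.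
Proof.
move=> y_le; have y_lt1 : 0 < 1 - y by lra.
have -> : expR y = (expR (- y))^-1 by rewrite expRN invrK.
apply: (@le_trans _ _ (1 - y)^-1).
  by rewrite lef_pV2 ?posrE ?expR_gt0 //; have := expR_ge1Dx (- y); lra.
rewrite -[_^-1]mul1r ler_pdivrMr //.
have : 0 <= y ^+ 2 * (1 - 2 * y) by rewrite mulr_ge0 ?sqr_ge0 //; lra.
by rewrite !expr2; nra.
Qed.

Definition mean (R : numDomainType) (A : finType) (q h : A -> R) : R := \sum_a q a * h a.

Section Hoeffding.
Variables (R : realType) (A : finType) (q h : A -> R).
Hypotheses (q_ge0 : forall a, 0 <= q a) (q_sum1 : \sum_a q a = 1).
Hypothesis h_le1 : forall a, `|h a| <= 1.

Lemma sum_prod_distr N : \sum_(o : {ffun 'I_N -> A}) \prod_j q (o j) = 1.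
Proof. by rewrite -(bigA_distr_bigA (fun j => q)) big1. Qed.

Lemma normr_mean_le1 : `|mean q h| <= 1.
Proof.
rewrite -q_sum1; apply: (le_trans (ler_norm_sum _ _ _)); apply: ler_sum => a _.
by rewrite normrM ger0_norm // ler_piMr.
Qed.

Lemma mgf_le (l : R) : 0 <= l -> 4 * l <= 1 ->
  \sum_a q a * expR (l * (h a - mean q h)) <= expR (8 * l ^+ 2).
Proof.
move=> l_ge0 l_le.
have dev_le2 a : `|h a - mean q h| <= 2.
  by apply: (le_trans (ler_normB _ _)); have := h_le1 a; have := normr_mean_le1; lra.
apply: (@le_trans _ _ (\sum_a (q a + l * (q a * h a) - l * mean q h * q a + 8 * l ^+ 2 * q a))).
  apply: ler_sum => a _; have := dev_le2 a; rewrite ler_norml => /andP [dev_ge dev_le].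
  have sq_le : (h a - mean q h) ^+ 2 <= 4 by nra.
  apply: (le_trans (ler_wpM2l (q_ge0 a) (expR_le_quad _))); first nra.
  have : 0 <= q a * l ^+ 2 * (4 - (h a - mean q h) ^+ 2).
    by rewrite !mulr_ge0 ?sqr_ge0 // subr_ge0.
  by rewrite exprMn; nra.
rewrite !big_split /= sumrN -!big_distrr /= -/(mean q h) q_sum1.
by have := expR_ge1Dx (8 * l ^+ 2); lra.
Qed.

Lemma hoeffding_upper N (eps : R) : 0 < eps -> eps <= 1 ->
  \sum_(o : {ffun 'I_N -> A} | eps * N%:R < \sum_j h (o j) - N%:R * mean q h) \prod_j q (o j)
    <= expR (- (N%:R * eps ^+ 2 / 32)).
Proof.
(* Chernoff's method, with the l that optimises the bound of mgf_le *)
move=> eps_gt0 eps_le1; set l := eps / 16.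
have dev_sum o : \sum_j h (o j) - N%:R * mean q h = \sum_(j < N) (h (o j) - mean q h).
  by rewrite sumrB sumr_const card_ord mulr_natl.
apply: (@le_trans _ _ (\sum_(o : {ffun 'I_N -> A}) \prod_j q (o j) *
    expR (l * \sum_j (h (o j) - mean q h) - l * eps * N%:R))).
  rewrite big_mkcond /=; apply: ler_sum => o _.
  have w_ge0 : 0 <= \prod_j q (o j) by apply: prodr_ge0.
  case: ifP => [|_]; last by rewrite mulr_ge0 ?expR_ge0.
  rewrite dev_sum => dev_gt; rewrite -[X in X <= _]mulr1 ler_wpM2l //.
  have := expR_ge1Dx (l * \sum_j (h (o j) - mean q h) - l * eps * N%:R).
  by rewrite /l; nra.
rewrite (eq_bigr (fun o : {ffun 'I_N -> A} => expR (- (l * eps * N%:R)) *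
    \prod_j (q (o j) * expR (l * (h (o j) - mean q h))))); last first.
  by move=> o _; rewrite expRD mulr_sumr expR_sum big_split /=; ring.
rewrite -big_distrr /= -(bigA_distr_bigA (fun j a => q a * expR (l * (h a - mean q h)))) /=.
rewrite prodr_const card_ord.
apply: (@le_trans _ _ (expR (- (l * eps * N%:R)) * expR (8 * l ^+ 2) ^+ N)).
  rewrite ler_wpM2l ?expR_ge0 // lerXn2r ?nnegrE ?expR_ge0 ?mgf_le //; try by rewrite /l; lra.
  by apply: sumr_ge0 => a _; rewrite mulr_ge0 ?expR_ge0.
by rewrite -expRM_natl -expRD ler_expR /l; lra.
Qed.

End Hoeffding.

Lemma hoeffding (R : realType) (A : finType) (q h : A -> R) N (eps : R) :
  (forall a, 0 <= q a) -> \sum_a q a = 1 -> (forall a, `|h a| <= 1) -> 0 < eps -> eps <= 1 ->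
  \sum_(o : {ffun 'I_N -> A} | eps * N%:R < `|\sum_j h (o j) - N%:R * mean q h|) \prod_j q (o j)
    <= 2 * expR (- (N%:R * eps ^+ 2 / 32)).
Proof.
move=> q_ge0 q_sum1 h_le1 eps_gt0 eps_le1.
have mean_opp : mean q (fun a => - h a) = - mean q h.
  by rewrite /mean -sumrN; apply: eq_bigr => a _; rewrite mulrN.
pose dev (b : bool) (o : {ffun 'I_N -> A}) :=
  (-1) ^+ b * (\sum_j h (o j) - N%:R * mean q h).
apply: (le_trans (union_bound (B := fun b o => eps * N%:R < dev b o) _ _)).
- by move=> o; apply: prodr_ge0.
- move=> o /=; rewrite /dev; case: ler0P => _ dev_gt.
    by exists true; rewrite expr1 mulN1r.
  by exists false; rewrite expr0 mul1r.
rewrite big_bool /= mulr2n mulrDl mul1r; apply: lerD.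
  rewrite (eq_bigl (fun o : {ffun 'I_N -> A} =>
    eps * N%:R < \sum_j - h (o j) - N%:R * mean q (fun a => - h a))).
    by apply: hoeffding_upper => // a; rewrite normrN.
  by move=> o; rewrite /dev expr1 mulN1r mean_opp sumrN mulrN opprB addrC opprK.
by rewrite /dev; under eq_bigl do rewrite expr0 mul1r; exact: hoeffding_upper.
Qed.

Section Marginals.
Variables (R : realType) (n : nat).

Definition prefix_eq (k : nat) (x y : plabel n) := [forall i : 'I_n, (i < k)%N ==> (y i == x i)].

Definition marg_obs (k : nat) (x al : plabel n) : R :=
  2 ^+ k / 2 ^+ n * \sum_(y | prefix_eq k x y) bell_sign R al y.

Lemma sum_bell_sign_prefix k (x al : plabel n) :
  \sum_(y | prefix_eq k x y) bell_sign R al y =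
  \prod_(i < n) (if (i < k)%N then bell_sign1 R (al i) (x i)
                 else 2 * (-1) ^+ ((al i).1 && (al i).2)).
Proof.
rewrite big_mkcond /=.
rewrite (eq_bigr (fun y : plabel n => \prod_(i < n)
    (((i < k)%N ==> (x i == y i))%:R * bell_sign1 R (al i) (y i)))); last first.
  move=> y _; rewrite big_split /= prodr_nat_forall /prefix_eq.
  under eq_forallb do rewrite eq_sym.
  by case: ifP; rewrite ?mul1r ?mul0r.
rewrite -(bigA_distr_bigA (fun (i : 'I_n) p =>
    ((i < k)%N ==> (x i == p))%:R * bell_sign1 R (al i) p)).
apply: eq_bigr => i _; case: ifP => _ /=; first exact: sumr_delta.
by under eq_bigr do rewrite mul1r; apply: sum_bell_sign1.
Qed.

Lemma prodr_if_lt k : (k <= n)%N ->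
  \prod_(i < n) (if (i < k)%N then 1 else 2 : R) = 2 ^+ (n - k).
Proof.
move=> le_kn; rewrite -(big_mkord xpredT (fun i => if (i < k)%N then 1 else 2 : R)).
rewrite (big_cat_nat (leq0n k) le_kn) /= big_nat_cond big1 ?mul1r; last first.
  by move=> i /andP [/andP [_ ->]].
rewrite big_nat_cond (eq_bigr (fun _ => 2)) -?big_nat_cond ?prodr_const_nat //.
by move=> i /andP [/andP [ki _] _]; rewrite ltnNge ki.
Qed.

Lemma normr_marg_obs k (x al : plabel n) : (k <= n)%N -> `|marg_obs k x al| = 1.
Proof.
move=> le_kn; rewrite /marg_obs sum_bell_sign_prefix normrM normr_prod.
rewrite (eq_bigr (fun i : 'I_n => if (i < k)%N then 1 else 2 : R)); last first.
  move=> i _; case: ifP => _; rewrite !normrM !normrX normrN1 !expr1n ?mulr1 //.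
  by rewrite normr_nat.
rewrite prodr_if_lt // ger0_norm ?divr_ge0 ?exprn_ge0 //.
by rewrite mulrAC -exprD subnKC // mulfV // expf_neq0 // pnatr_eq0.
Qed.

Lemma pauli_distE (psi : {ffun bits n -> R[i]}) y :
  pauli_dist psi y = (2 ^- n * \sum_al bell_prob psi al * bell_sign R al y)%:C.
Proof.
by rewrite /pauli_dist pauli_expval_sqr -rmorph_sum rmorphM fmorphV rmorphXn rmorph_nat mulrC.
Qed.

Lemma marg_evenE (psi : {ffun bits n -> R[i]}) k x :
  marg_even psi k x = (2 ^- k * mean (bell_prob psi) (marg_obs k x))%:C.
Proof.
rewrite /marg_even /mean; under eq_bigr do rewrite pauli_distE.
rewrite -rmorph_sum -big_distrr exchange_big /=; congr _%:C.
rewrite !big_distrr; apply: eq_bigr => al _; rewrite /marg_obs -big_distrr /=.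
have two_neq0 : (2 : R) != 0 by rewrite pnatr_eq0.
by field; rewrite !expf_neq0.
Qed.

End Marginals.

(* x with its bit w_(k+1) replaced by b (qubits are indexed from 0) *)
Definition set_w n (k : nat) (x : plabel n) (b : bool) : plabel n :=
  [ffun i : 'I_n => if (i : nat) == k then ((x i).1, b) else x i].

Lemma prefix_set_w n (k : 'I_n) (x y : plabel n) b :
  [forall i : 'I_n, ((i.+1 < k.+1)%N ==> (y i == x i)) &&
                    ((i.+1 == k.+1)%N ==> ((y i).1 == (x i).1))] && ((y k).2 == b) =
  prefix_eq k.+1 (set_w k x b) y.
Proof.
apply/andP/forallP => [[/forallP yx /eqP ykb] i | yx].
  have := yx i; rewrite ffunE !ltnS eqSS.
  case: ltngtP => //= [_ | /ord_inj -> /eqP yk1]; first by rewrite andbT.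
  by rewrite -ykb -yk1 -surjective_pairing.
have /implyP/(_ (ltnSn k))/eqP := yx k; rewrite ffunE eqxx => yk.
split; last by rewrite yk.
apply/forallP => i; have /implyP := yx i; rewrite ffunE !ltnS eqSS.
by case: ltngtP => //= [_ /(_ isT) -> | /ord_inj -> _]; rewrite ?yk.
Qed.

Lemma marg_oddE (R : realType) n (psi : {ffun bits n -> R[i]}) (k : 'I_n) x :
  marg_odd psi k.+1 x =
  marg_even psi k.+1 (set_w k x false) + marg_even psi k.+1 (set_w k x true).
Proof.
rewrite /marg_odd (bigID (fun y : plabel n => (y k).2)) /= addrC.
congr (_ + _); apply: eq_bigl => y.
  by rewrite -[RHS]/(prefix_eq _ _ y) -prefix_set_w eqbF_neg.
by rewrite -[RHS]/(prefix_eq _ _ y) -prefix_set_w eqb_id.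
Qed.

Lemma normr_real_complex (R : realType) (r : R) : `|r%:C| = `|r|%:C.
Proof. by rewrite normc_def /= expr0n /= addr0 sqrtr_sqr. Qed.

Section Estimators.
Variables (R : realType) (n N : nat).
Local Notation outcome := {ffun 'I_N -> plabel n}.

Definition est_even (o : outcome) (k : nat) (x : plabel n) : R[i] :=
  (2 ^- k * (N%:R^-1 * \sum_j marg_obs R k x (o j)))%:C.

Definition est_odd (o : outcome) (k : nat) (x : plabel n) : R[i] :=
  est_even o k (set_w k.-1 x false) + est_even o k (set_w k.-1 x true).

Definition marg_dev psi (o : outcome) k (x : plabel n) : R :=
  \sum_j marg_obs R k x (o j) - N%:R * mean (bell_prob psi) (marg_obs R k x).

Lemma est_even_err psi (o : outcome) k x (eps : R) : (0 < N)%N ->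
  `|marg_dev psi o k x| <= eps * N%:R ->
  `|est_even o k x - marg_even psi k x| <= (eps / 2 ^+ k)%:C.
Proof.
move=> N_gt0 dev_le; have N_pos : 0 < N%:R :> R by rewrite ltr0n.
rewrite marg_evenE /est_even -rmorphB normr_real_complex lecR -mulrBr normrM.
rewrite ger0_norm ?invr_ge0 ?exprn_ge0 // mulrC ler_wpM2r ?invr_ge0 ?exprn_ge0 //.
have -> : N%:R^-1 * \sum_j marg_obs R k x (o j) - mean (bell_prob psi) (marg_obs R k x) =
    N%:R^-1 * marg_dev psi o k x.
  by rewrite /marg_dev mulrBr mulrA mulVf ?mul1r // lt0r_neq0.
by rewrite normrM gtr0_norm ?invr_gt0 // mulrC ler_pdivrMr.
Qed.

Lemma est_err psi (o : outcome) (k : 'I_n) x (eps : R) : (0 < N)%N ->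
  (forall y, `|marg_dev psi o k.+1 y| <= eps * N%:R) ->
  (`|est_even o k.+1 x - marg_even psi k.+1 x| <= (eps / 2 ^+ k.+1)%:C) &&
  (`|est_odd o k.+1 x - marg_odd psi k.+1 x| <= (2 * eps / 2 ^+ k.+1)%:C).
Proof.
move=> N_gt0 dev_le; rewrite est_even_err //=.
rewrite marg_oddE /est_odd /= opprD addrACA (le_trans (ler_normD _ _)) //.
have -> : 2 * eps / 2 ^+ k.+1 = eps / 2 ^+ k.+1 + eps / 2 ^+ k.+1 by ring.
by rewrite rmorphD lerD ?est_even_err.
Qed.

End Estimators.

Lemma ln_inv_ge_half (R : realType) (delta : R) : 0 < delta -> delta <= 2^-1 -> 2^-1 <= ln delta^-1.
Proof.
move=> delta_gt0 delta_le; rewrite -ler_expR lnK ?posrE ?invr_gt0 //.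
apply: (@le_trans _ _ 2); first by apply: (le_trans (expR_le_quad _)); lra.
by rewrite -[2]invrK lef_pV2 ?posrE ?invr_gt0.
Qed.

Lemma sample_size (R : realType) n (eps delta : R) :
  (0 < n)%N -> 0 < eps -> eps < 1 -> 0 < delta -> delta <= 2^-1 ->
  exists N : nat, [/\ (0 < N)%N, N%:R <= 1000 * n%:R * ln delta^-1 / eps ^+ 2
                    & 992 * n%:R * ln delta^-1 <= N%:R * eps ^+ 2].
Proof.
move=> n_gt0 eps_gt0 eps_lt1 delta_gt0 delta_le.
have L_ge := ln_inv_ge_half delta_gt0 delta_le.
have n_ge1 : 1 <= n%:R :> R by rewrite ler1n.
have eps2_gt0 : 0 < eps ^+ 2 by rewrite exprn_gt0.
set Z := n%:R * ln delta^-1 / eps ^+ 2.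
have Z_ge : 2^-1 <= Z by rewrite /Z ler_pdivlMr //; nra.
exists (Num.truncn (992 * Z)).+1; split=> //.
  have : (Num.truncn (992 * Z))%:R <= 992 * Z by rewrite truncn_le; lra.
  by rewrite -addn1 natrD -[1000 * _ * _]mulrA -mulrA -/Z; lra.
have := truncnS_gt (992 * Z); rewrite /Z mulrA ltr_pdivrMr // => /ltW.
by rewrite mulrA.
Qed.

Lemma expn4_mul_le (m : nat) : (4 ^ m * m * 2 <= 16 ^ m)%N.
Proof.
elim: m => [|m IHm] //; rewrite !expnS.
have : (4 ^ m <= 16 ^ m)%N by rewrite -[16%N]/(4 * 4)%N expnMn leq_pmulr ?expn_gt0.
by nia.
Qed.

Lemma union_tail_le (R : realType) n N (eps delta : R) :
  (0 < n)%N -> 0 < delta -> delta <= 2^-1 -> 992 * n%:R * ln delta^-1 <= N%:R * eps ^+ 2 ->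
  #|{: plabel n * 'I_n}|%:R * (2 * expR (- (N%:R * eps ^+ 2 / 32))) <= delta.
Proof.
move=> n_gt0 delta_gt0 delta_le N_ge.
have L_ge := ln_inv_ge_half delta_gt0 delta_le.
have n_ge1 : 1 <= n%:R :> R by rewrite ler1n.
have deltaE : delta = expR (- ln delta^-1) by rewrite expRN lnK ?invrK // posrE invr_gt0.
(* 992 = 31 * 32, and 31 n ln(1/delta) >= ln(1/delta) + 15 n absorbs 2 n 4^n <= e^(15 n) *)
have tail : expR (- (N%:R * eps ^+ 2 / 32)) <= delta * expR (- (n%:R * 15)).
  by rewrite [in X in _ <= X * _]deltaE -expRD ler_expR; nra.
have count : #|{: plabel n * 'I_n}|%:R * 2 <= expR (n%:R * 15) :> R.
  rewrite card_prod card_ffun card_prod card_bool !card_ord expRM_natl.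
  apply: (@le_trans _ _ (16 ^ n)%N%:R); first by rewrite -natrM ler_nat expn4_mul_le.
  rewrite natrX lerXn2r ?nnegrE ?expR_ge0 //.
  by have := expR_ge1Dx (15 : R); lra.
rewrite mulrA; apply: (le_trans (ler_wpM2l _ tail)); first by rewrite mulr_ge0.
apply: (le_trans (ler_wpM2r _ count)); first by rewrite mulr_ge0 ?expR_ge0 ?ltW.
by rewrite mulrCA -expRD addrN expR0 mulr1.
Qed.

Theorem corollary3 (R : realType) :
  exists c : R, 0 < c /\
  forall (n : nat) (eps delta : R),
    (0 < n)%N -> 0 < eps -> eps < 1 -> 0 < delta -> delta <= 2^-1 ->
    exists N : nat,
      N%:R <= c * n%:R * ln (delta^-1) / eps ^+ 2 /\
      exists (O : finType) (M : O -> pairs_basis n N -> pairs_basis n N -> R[i])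
             (est_even est_odd : O -> nat -> plabel n -> R[i]),
        is_povm M /\
        forall psi : {ffun bits n -> R[i]}, pure_state psi ->
          (1 - delta)%:C <= povm_prob M (copies (N:=N) psi)
            (fun o => [forall x : plabel n, forall k : 'I_n,
               (`|est_even o k.+1 x - marg_even psi k.+1 x|
                  <= (eps / 2 ^+ k.+1)%:C) &&
               (`|est_odd o k.+1 x - marg_odd psi k.+1 x|
                  <= (2 * eps / 2 ^+ k.+1)%:C)]).
Proof.
exists 1000; split=> [|n eps delta n_gt0 eps_gt0 eps_lt1 delta_gt0 delta_le]; first by lra.
have [N [N_gt0 N_le N_ge]] := sample_size n_gt0 eps_gt0 eps_lt1 delta_gt0 delta_le.
exists N; split=> //.
exists {ffun 'I_N -> plabel n}, (@bell_povm R n N), (@est_even R n N), (@est_odd R n N).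
split=> [|psi psi_pure]; first exact: bell_povm_is_povm.
rewrite povm_prob_bell lecR.
apply: (prob_ge_union_bound
  (B := fun (p : plabel n * 'I_n) o => eps * N%:R < `|marg_dev psi o p.2.+1 p.1|)).
- by move=> o; apply: prodr_ge0 => j _; apply: bell_prob_ge0.
- exact/sum_prod_distr/sum_bell_prob.
- move=> o /forallP good; apply/forallP => x; apply/forallP => k.
  by apply: est_err => // y; rewrite leNgt; apply: (good (y, k)).
apply: le_trans (union_tail_le n_gt0 delta_gt0 delta_le N_ge).
rewrite mulr_natl -sumr_const; apply: ler_sum => -[y k] _; apply: hoeffding => //.
- exact: bell_prob_ge0.
- exact: sum_bell_prob.
- by move=> al; rewrite normr_marg_obs.
- exact: ltW.
Qed.
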